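(* Let $U$ be a nonempty finite set, $R\subseteq U\times U$ serial and transitive, and $cl$ the closure operator of $M(Reg(U,R))$. Then $cl(X)=X$ for every $X\in Reg(U,R)$; i.e., every regular set is a closed set of $M(Reg(U,R))$.
   Context: $R_s(x)=\{y\in U\mid xRy\}$; $\underline{R}(X)=\{x\mid R_s(x)\subseteq X\}$, $\overline{R}(X)=\{x\mid R_s(x)\cap X\neq\emptyset\}$; $X$ is regular if $X=\underline{R}(\overline{R}(X))$, and $Reg(U,R)$ is the lattice of regular sets under inclusion, with least element $\emptyset$. $h(A)$ is the length of a maximal chain in $[\emptyset,A]$. $M(Reg(U,R))$ is the matroid on $U$ with independent sets $\{X\subseteq U\mid h(Y)\ge|X\cap Y|\ \forall Y\in Reg(U,R)\}$, rank function $r(X)=\max\{|I|\mid I\subseteq X \text{ independent}\}$, and closure operator $cl(X)=\{u\in U\mid r(X\cup\{u\})=r(X)\}$. *)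

From mathcomp Require Import all_boot.
Set Implicit Arguments. Unset Strict Implicit. Unset Printing Implicit Defensive.

Section RoughMatroid.
Variables (U : finType) (R : rel U).

Definition Rs (x : U) : {set U} := [set y | R x y].

Definition lowerR (X : {set U}) : {set U} := [set x | Rs x \subset X].
Definition upperR (X : {set U}) : {set U} := [set x | Rs x :&: X != set0].

Definition regular (X : {set U}) : bool := X == lowerR (upperR X).

Definition chainb (A : {set U}) (k : nat) : bool :=
  [exists c : {ffun 'I_k.+1 -> {set U}},
     [&& c ord0 == set0, c ord_max == A,
         [forall i, regular (c i)] &
         [forall i : 'I_k.+1, forall j : 'I_k.+1, (i < j)%N ==> (c i \proper c j)]]].

(* h(A): length of a maximal chain in [set0, A] (taken as the maximum length,
   i.e. the height of A in Reg(U,R); chains have length <= #|U|). *)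
Definition h (A : {set U}) : nat := \max_(k < #|U|.+1 | chainb A k) k.

Definition indep (X : {set U}) : bool :=
  [forall Y : {set U}, regular Y ==> (#|X :&: Y| <= h Y)].

Definition rank (X : {set U}) : nat :=
  \max_(I in powerset X | indep I) #|I|.

Definition cl (X : {set U}) : {set U} :=
  [set u | rank (u |: X) == rank X].

End RoughMatroid.

From mathcomp Require Import all_boot.
Set Implicit Arguments. Unset Strict Implicit. Unset Printing Implicit Defensive.

(* Call s terminal when every successor of s reaches back to s.  For serial
   transitive R every point reaches a terminal point, and the terminal points
   split into classes with a common successor set; fix one representative per
   class ([reps]).  The regular sets are then exactly the sets [regset Q] of
   points all of whose reachable representatives lie in Q, and a regular set
   Y is determined by its trace Y :&: reps.  Hence Reg(U,R) is isomorphic to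
   the Boolean lattice of subsets of [reps], and h Y = #|Y :&: reps|.

   For a regular X with trace Q this gives rank X <= #|Q|, while for u \notin X
   the set u |: Q is independent: a regular Y containing u also contains a
   representative reachable from u and outside X.  So adding u raises the
   rank, i.e. u \notin cl X, and cl X = X. *)

Lemma indep_le_rank (U : finType) (R : rel U) (I X : {set U}) :
  I \subset X -> indep R I -> #|I| <= rank R X.
Proof.
by move=> IX indepI; apply: (leq_bigmax_cond (P := fun J => _ && _)); rewrite powersetE IX.
Qed.

Section SerialTransitive.
Variables (U : finType) (R : rel U).
Hypothesis serialR : forall x : U, exists y : U, R x y.
Hypothesis transR : transitive R.

Definition terminal (s : U) : bool := [forall y, R s y ==> R y s].

Lemma terminalP s : reflect (forall y, R s y -> R y s) (terminal s).
Proof.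
apply: (iffP forallP) => H y; first exact/implyP.
by apply/implyP; apply: H.
Qed.

Lemma terminal_refl s : terminal s -> R s s.
Proof. by move=> /terminalP Hs; have [y Hy] := serialR s; apply: transR (Hs y Hy). Qed.

Lemma terminal_Rs s r : terminal s -> R s r -> Rs R r = Rs R s.
Proof.
move=> /terminalP Hs Hsr; apply/setP => w; rewrite !inE.
by apply/idP/idP; apply: transR; [exact: Hsr | exact: Hs].
Qed.

Lemma terminal_succ s r : terminal s -> R s r -> terminal r.
Proof.
move=> /terminalP Hs Hsr; apply/terminalP => w Hrw.
exact: transR (Hs w (transR Hsr Hrw)) Hsr.
Qed.

(* A successor y of x with fewest successors is followed only by points with
   the same successor set; any successor of y is then terminal. *)
Lemma exists_terminal x : exists2 z, R x z & terminal z.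
Proof.
have [y0 Hy0] := serialR x.
have [y Hxy Hmin] := @arg_minnP _ y0 (R x) (fun y => #|Rs R y|) Hy0.
have Rs_succ w : R y w -> Rs R w = Rs R y.
  move=> Hyw; apply/eqP; rewrite eqEcard Hmin ?andbT; last exact: transR Hyw.
  by apply/subsetP => v; rewrite !inE; apply: transR.
have [z Hyz] := serialR y.
exists z; first exact: transR Hyz.
apply/terminalP => w Hzw.
have : z \in Rs R w by rewrite (Rs_succ w (transR Hyz Hzw)) inE.
by rewrite inE.
Qed.

(* One chosen representative of each terminal class. *)
Definition reps : {set U} :=
  [set s | terminal s & [pick y in Rs R s] == Some s].

Lemma reps_terminal r : r \in reps -> terminal r.
Proof. by rewrite inE => /andP[]. Qed.

Lemma exists_rep x : exists2 r, r \in reps & R x r.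
Proof.
have [z Hxz Hz] := exists_terminal x.
case Ep: [pick y in Rs R z] => [r|]; last first.
  by move: Ep; case: pickP => // /(_ z); rewrite inE terminal_refl.
have Hzr : R z r by move: Ep; case: pickP => // r' + [<-]; rewrite inE.
exists r; last exact: transR Hzr.
by rewrite inE (terminal_succ Hz Hzr) (terminal_Rs Hz Hzr) /= Ep.
Qed.

Lemma reps_succ r r' : r \in reps -> r' \in reps -> R r r' -> r' = r.
Proof.
rewrite !inE => /andP[Hr /eqP pick_r] /andP[_ /eqP pick_r'] Hrr'.
by move: pick_r'; rewrite (terminal_Rs Hr Hrr') pick_r => -[].
Qed.

(* The set of points all of whose reachable representatives lie in Q; these
   are exactly the regular sets. *)
Definition regset (Q : {set U}) : {set U} :=
  [set x | [forall r in reps, R x r ==> (r \in Q)]].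

Lemma regsetP (Q : {set U}) x :
  reflect (forall r, r \in reps -> R x r -> r \in Q) (x \in regset Q).
Proof.
rewrite inE; apply: (iffP forallP) => H r.
  by move=> Hr Hxr; have := H r; rewrite Hr Hxr.
by apply/implyP => Hr; apply/implyP; apply: H.
Qed.

Lemma regset_reps (Q : {set U}) r : r \in reps -> (r \in regset Q) = (r \in Q).
Proof.
move=> Hr; apply/regsetP/idP => [|Hq r' Hr' Hrr'].
  by apply; rewrite ?terminal_refl ?reps_terminal.
by rewrite (reps_succ Hr Hr' Hrr').
Qed.

(* Each [regset Q] is regular: x lies in lowerR (upperR (regset Q)) exactly
   when every representative reachable from x lies in Q. *)
Lemma regset_regular (Q : {set U}) : regular R (regset Q).
Proof.
apply/eqP/setP => x; rewrite [x \in lowerR _ _]inE.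
apply/idP/subsetP => [/regsetP Hx y|Hx].
  rewrite !inE => Hxy; have [r Hr Hyr] := exists_rep y.
  apply/set0Pn; exists r; rewrite in_setI [r \in Rs R y]inE Hyr regset_reps //.
  exact: Hx r Hr (transR Hxy Hyr).
apply/regsetP => r Hr Hxr.
have /set0Pn[w] : Rs R r :&: regset Q != set0 by have := Hx r; rewrite !inE; apply.
rewrite in_setI [w \in Rs R r]inE => /andP[Hrw /regsetP Hw].
by apply: (Hw r Hr); move/terminalP: (reps_terminal Hr); apply.
Qed.

Lemma regsetE (Y : {set U}) : regular R Y -> regset Y = Y.
Proof.
move=> /eqP regY; apply/setP => x; apply/regsetP/idP => [Hx|Hx r Hr Hxr].
  rewrite regY inE; apply/subsetP => y; rewrite !inE => Hxy.
  have [r Hr Hyr] := exists_rep y.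
  apply/set0Pn; exists r; rewrite in_setI [r \in Rs R y]inE Hyr.
  exact: Hx r Hr (transR Hxy Hyr).
have : r \in upperR R Y.
  by move: Hx; rewrite {1}regY inE => /subsetP; apply; rewrite inE.
rewrite inE => /set0Pn[v]; rewrite in_setI [v \in Rs R r]inE => /andP[Hrv Hv].
rewrite regY inE; apply/subsetP => w; rewrite !inE => Hrw.
apply/set0Pn; exists v; rewrite in_setI [v \in Rs R w]inE Hv andbT.
by move/terminalP: (reps_terminal Hr) => back; apply: transR (back w Hrw) Hrv.
Qed.

Lemma regset_subset (A B : {set U}) : A \subset B -> regset A \subset regset B.
Proof.
move=> /subsetP AB; apply/subsetP => x /regsetP Hx; apply/regsetP => r Hr Hxr.
exact/AB/Hx.
Qed.

Lemma regset_trace (A : {set U}) : regset (A :&: reps) = regset A.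
Proof.
apply/setP => x; apply/regsetP/regsetP => Hx r Hr Hxr; last by rewrite inE Hr Hx.
by have := Hx r Hr Hxr; rewrite inE => /andP[].
Qed.

(* Every point reaches a representative, so [regset set0] is empty. *)
Lemma regset0 : regset set0 = set0.
Proof.
apply/setP => x; rewrite in_set0; apply/regsetP => Hx.
by have [r Hr Hxr] := exists_rep x; have := Hx r Hr Hxr; rewrite in_set0.
Qed.

Lemma regular_trace_inj (Y Z : {set U}) :
  regular R Y -> regular R Z -> Y :&: reps = Z :&: reps -> Y = Z.
Proof.
move=> regY regZ trYZ.
by rewrite -(regsetE regY) -(regsetE regZ) -[regset Y]regset_trace trYZ regset_trace.
Qed.

(* Along a strictly increasing chain of regular sets the number of
   representatives strictly increases, so chains below Y are short. *)
Lemma chain_le (Y : {set U}) k : chainb R Y k -> k <= #|Y :&: reps|.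
Proof.
case/existsP => c /and4P[_ /eqP ck /forallP creg /forallP cinc].
have step (i j : 'I_k.+1) : i < j -> #|c i :&: reps| < #|c j :&: reps|.
  move=> lt_ij; have /forallP/(_ j) := cinc i; rewrite lt_ij /= => cij.
  apply: proper_card; rewrite properEneq setSI ?proper_sub // andbT.
  apply: contraTneq cij => trij.
  by rewrite (regular_trace_inj (creg i) (creg j) trij) properxx.
suff grow i : i <= k -> i <= #|c (inord i) :&: reps|.
  by have := grow k (leqnn k); rewrite (_ : inord k = ord_max) ?ck //; apply/val_inj/inordK.
elim: i => [|i IH] lt_ik //.
apply: leq_ltn_trans (IH (ltnW lt_ik)) (step _ _ _).
by rewrite !inordK // ltnW.
Qed.

(* Conversely, adding the representatives of Y one at a time gives a chain of
   regular sets of length #|Y :&: reps| from set0 to Y. *)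
Lemma chain_ge (Y : {set U}) : regular R Y -> chainb R Y #|Y :&: reps|.
Proof.
move=> regY; rewrite cardE; set s := enum (Y :&: reps).
have mem_s r : (r \in s) = (r \in Y :&: reps) by rewrite mem_enum.
pose first i := [set r in Y :&: reps | index r s < i].
apply/existsP; exists [ffun i : 'I_(size s).+1 => regset (first i)].
apply/and4P; split.
- rewrite ffunE -regset0; apply/eqP; congr regset; apply/setP => r.
  by rewrite !inE ltn0 andbF.
- rewrite ffunE; apply/eqP.
  rewrite -[in RHS](regsetE regY) -[in RHS]regset_trace; congr regset; apply/setP => r.
  by rewrite inE /= index_mem mem_s andbb.
- by apply/forallP => i; rewrite ffunE regset_regular.
apply/forallP => i; apply/forallP => j; apply/implyP => lt_ij.
have lt_is : i < size s by apply: leq_trans lt_ij _; rewrite -ltnS.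
have [r0 _] : exists r0, r0 \in Y :&: reps.
  by apply/card_gt0P; rewrite cardE -/s; apply: leq_ltn_trans lt_is.
set r := nth r0 s i.
have [rY rreps] : r \in Y /\ r \in reps by apply/andP; rewrite -in_setI -mem_s mem_nth.
have index_r : index r s = i by apply: index_uniq; rewrite ?enum_uniq.
rewrite !ffunE properE regset_subset /=; last first.
  by apply/subsetP => x; rewrite !inE => /andP[-> /ltn_trans]; apply.
by apply/subsetPn; exists r; rewrite regset_reps // inE in_setI rY rreps index_r ?ltnn.
Qed.

Lemma height_regular (Y : {set U}) : regular R Y -> h R Y = #|Y :&: reps|.
Proof.
move=> regY; apply/eqP; rewrite eqn_leq; apply/andP; split.
  by apply/bigmax_leqP => k; apply: chain_le.
have lt_YU : #|Y :&: reps| < #|U|.+1 by rewrite ltnS max_card.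
exact: (leq_bigmax_cond (Ordinal lt_YU) (chain_ge regY)).
Qed.

(* An independent subset of a regular X has at most h X elements. *)
Lemma rank_regular_le (X : {set U}) : regular R X -> rank R X <= #|X :&: reps|.
Proof.
move=> regX; apply/bigmax_leqP => I /andP[]; rewrite powersetE => IX /forallP/(_ X).
by rewrite regX (height_regular regX) /= (setIidPl IX).
Qed.

(* For u outside the regular set X, the representatives of X together with u
   form an independent set: a regular Y containing u also contains some
   representative reachable from u, which lies outside X. *)
Lemma indep_adjoin (X : {set U}) u :
  regular R X -> u \notin X -> indep R (u |: (X :&: reps)).
Proof.
move=> regX uX; apply/forallP => Y; apply/implyP => regY.
rewrite (height_regular regY).
have XrepsY : X :&: reps :&: Y \subset Y :&: reps.
  by apply/subsetP => v; rewrite !in_setI => /andP[/andP[_ ->] ->].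
have [uY|uY] := boolP (u \in Y); last first.
  have -> : (u |: (X :&: reps)) :&: Y = X :&: reps :&: Y.
    apply/setP => v; rewrite !(in_setI, in_setU1).
    by case: eqP => [->|] //=; rewrite (negPf uY) andbF.
  exact: subset_leq_card.
have [r rreps urX] : exists2 r, r \in reps & R u r && (r \notin X).
  apply/exists_inP; move: uX; apply: contraR => /exists_inPn noR.
  rewrite -(regsetE regX); apply/regsetP => r rreps ur.
  by have := noR r rreps; rewrite ur negbK.
case/andP: urX => ur rX.
have rY : r \in Y by move: uY; rewrite -{1}(regsetE regY) => /regsetP; apply.
have -> : (u |: (X :&: reps)) :&: Y = u |: (X :&: reps :&: Y).
  apply/setP => v; rewrite !(in_setI, in_setU1).
  by case: eqP => [->|] //=; rewrite uY.
rewrite cardsU1 !in_setI (negPf uX) /= add1n.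
apply: proper_card; rewrite properE XrepsY; apply/subsetPn; exists r.
  by rewrite in_setI rY.
by rewrite !in_setI (negPf rX).
Qed.

End SerialTransitive.

Theorem proposition7 (U : finType) (R : rel U)
  (hU : 0 < #|U|)
  (hserial : forall x : U, exists y : U, R x y)
  (htrans : transitive R) :
  forall X : {set U}, regular R X -> cl R X = X.
Proof.
move=> X regX; apply/setP => u; rewrite inE.
have [uX|uX] := boolP (u \in X); first by rewrite (setUidPr _) ?sub1set ?uX ?eqxx.
set Q := X :&: reps R.
(* rank X <= #|Q| < #|u |: Q| <= rank (u |: X) *)
have uQ : u \notin Q by rewrite in_setI negb_and uX.
apply/negbTE; rewrite neq_ltn; apply/orP; right.
apply: leq_ltn_trans (rank_regular_le hserial htrans regX) _.
have indep_uQ : indep R (u |: Q) := indep_adjoin hserial htrans regX uX.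
rewrite -/Q; apply: leq_trans _ (indep_le_rank (setUS [set u] (subsetIl X (reps R))) indep_uQ).
by rewrite cardsU1 uQ.
Qed.
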